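(* Assume the setting described in the context, so in particular $\tilde\lambda_{s,k}\neq1$ for $s=a,b$ and all $k=1,\dots,d$. Fix $j\in\{1,\dots,d\}$ and integers $L\ge\ell\ge2$, and let $0\le m<n$ be integers with $n-m\ge2$. Put $\Lambda'=\Lambda^{(j)}_n\setminus\Lambda^{(j)}_m$. Then $$C(\Lambda',ab)\le C(\Lambda',a)\,C(\Lambda',b)\le \tilde c\,C(\Lambda',ab),$$ where $$\tilde c:=\Bigl(1-\prod_{k=1}^d\bigl(\max\{1+e^{-2|\log\tilde\lambda_{a,k}|},\,1+e^{-2|\log\tilde\lambda_{b,k}|}\}\bigr)^{-1}\Bigr)^{-1}.$$
   Context: Let $\lambda_{s,k}>0$ ($s\in\{a,b\}$, $k=1,\dots,d$), $\lambda_s^x:=\prod_k\lambda_{s,k}^{x_k}$ for $x\in\mathbb{Z}^d$, and for finite $\Lambda\subset\mathbb{Z}^d$ let $C(\Lambda,s):=\sum_{x\in\Lambda}\lambda_s^{2x}$ and $C(\Lambda,ab):=\sum_{x,y\in\Lambda,\,x\neq y}\lambda_a^{2x}\lambda_b^{2y}$. Volumes $\Lambda_{\vec L}$, $\vec L=(L_1,\dots,L_d)\in\mathbb{N}^d$, are defined in one of two ways. Case 1 ($\lambda_{a,1}\ne1$, $\lambda_{b,1}\ne1$): choose integers $v(k)\ge0$, $k=2,\dots,d$, with $\tilde\lambda_{s,k}:=\lambda_{s,k}\lambda_{s,1}^{-v(k)}\ne1$ for $s=a,b$, set $\tilde\lambda_{s,1}:=\lambda_{s,1}$, and $\Lambda_{\vec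 L}:=\{x\in\mathbb{Z}^d: 0\le x_1+\sum_{k\ge2}v(k)x_k\le L_1-1,\ 0\le x_k\le L_k-1\ (k\ge2)\}$. Case 2 ($d\ge2$, $\lambda_{a,1}\ne1$, $\lambda_{b,2}\ne1$, $\lambda_{a,2}=\lambda_{b,1}=1$): set $\tilde\lambda_{a,1}:=\lambda_{a,1}$, $\tilde\lambda_{a,2}:=\lambda_{a,1}^{-1}$, $\tilde\lambda_{b,1}=\tilde\lambda_{b,2}:=\lambda_{b,2}$, choose integers $v(k)\ge0$, $k\ge3$, with $\tilde\lambda_{s,k}:=\lambda_{s,k}\tilde\lambda_{s,1}^{-v(k)}\ne1$, and $\Lambda_{\vec L}:=\{x\in\mathbb{Z}^d: 0\le \tfrac{x_1+x_2}{2}+\sum_{k\ge3}v(k)x_k\le L_1-\tfrac12,\ 0\le\tfrac{x_2-x_1}{2}\le L_2-\tfrac12,\ 0\le x_k\le L_k-1\ (k\ge3)\}$. For fixed $j$, $L$, $\ell$ and integer $n\ge0$, $\Lambda^{(j)}_n:=\Lambda_{(L,\dots,L,n,\ell,\dots,\ell)}$ with $n$ in the $j$-th entry, $L$ in entries $<j$ and $\ell$ in entries $>j$ (so $\Lambda^{(j)}_0=\emptyset$). *)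

From HB Require Import structures.
From mathcomp Require Import all_boot all_order all_algebra.
From mathcomp Require Import boolp classical_sets fsbigop reals sequences exp.
Set Implicit Arguments. Unset Strict Implicit. Unset Printing Implicit Defensive.
Import Order.TTheory GRing.Theory Num.Theory.
Local Open Scope ring_scope.
Local Open Scope classical_set_scope.

(* Conventions: coordinates are 1-based, k = 1..d.
   The parameters lambda_{a,k}, lambda_{b,k} are given as functions
   la lb : nat -> R (only k = 1..d matter), v : nat -> nat (only k >= 2 in
   Case 1 / k >= 3 in Case 2 matter). *)

Definition coord (d : nat) (x : d.-tuple int) (k : nat) : int := nth 0 x k.-1.

Definition lpow (R : realType) (d : nat) (l : nat -> R) (x : d.-tuple int) : R :=
  \prod_(1 <= k < d.+1) (l k) ^ (coord x k).

Definition Cs (R : realType) (d : nat) (l : nat -> R) (Lam : set (d.-tuple int)) : R :=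
  \sum_(x \in Lam) lpow l x ^+ 2.

Definition Cab (R : realType) (d : nat) (la lb : nat -> R)
    (Lam : set (d.-tuple int)) : R :=
  \sum_(x \in Lam) \sum_(y \in Lam `\ x) (lpow la x ^+ 2 * lpow lb y ^+ 2).

(* The two cases of the setting: case2 = false is Case 1, case2 = true is
   Case 2. *)

Definition tl1 (R : realType) (case2 : bool) (l : nat -> R) (s_is_b : bool) : R :=
  if case2 && s_is_b then l 2%N else l 1%N.

Definition tl (R : realType) (case2 : bool) (v : nat -> nat) (l : nat -> R)
    (s_is_b : bool) (k : nat) : R :=
  if ~~ case2 then
    (if k == 1%N then l 1%N else l k * (l 1%N) ^- (v k))
  else
    (if k == 1%N then tl1 case2 l s_is_b
     else if k == 2%N then (if s_is_b then l 2%N else (l 1%N)^-1)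
     else l k * (tl1 case2 l s_is_b) ^- (v k)).

Definition setting (R : realType) (d : nat) (case2 : bool) (v : nat -> nat)
    (la lb : nat -> R) : Prop :=
  (1 <= d)%N /\
  (forall k, (1 <= k <= d)%N -> 0 < la k /\ 0 < lb k) /\
  if ~~ case2 then
    la 1%N != 1 /\ lb 1%N != 1 /\
    (forall k, (2 <= k <= d)%N -> tl case2 v la false k != 1 /\ tl case2 v lb true k != 1)
  else
    (2 <= d)%N /\ la 1%N != 1 /\ lb 2%N != 1 /\ la 2%N = 1 /\ lb 1%N = 1 /\
    (forall k, (3 <= k <= d)%N -> tl case2 v la false k != 1 /\ tl case2 v lb true k != 1).

Definition Vol (R : realType) (d : nat) (case2 : bool) (v : nat -> nat)
    (Lv : nat -> nat) : set (d.-tuple int) :=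
  if ~~ case2 then
    [set x | (0 <= coord x 1 + \sum_(2 <= k < d.+1) (v k)%:Z * coord x k)%R /\
             (coord x 1 + \sum_(2 <= k < d.+1) (v k)%:Z * coord x k <= (Lv 1%N)%:Z - 1)%R /\
             (forall k, (2 <= k <= d)%N ->
                 (0 <= coord x k)%R /\ (coord x k <= (Lv k)%:Z - 1)%R)]
  else
    [set x | (0 <= ((coord x 1)%:~R + (coord x 2)%:~R) / 2
                  + \sum_(3 <= k < d.+1) (v k)%:R * (coord x k)%:~R :> R)%R /\
             (((coord x 1)%:~R + (coord x 2)%:~R) / 2
                  + \sum_(3 <= k < d.+1) (v k)%:R * (coord x k)%:~R
                <= (Lv 1%N)%:R - 2^-1 :> R)%R /\
             (0 <= ((coord x 2)%:~R - (coord x 1)%:~R) / 2 :> R)%R /\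
             (((coord x 2)%:~R - (coord x 1)%:~R) / 2 <= (Lv 2%N)%:R - 2^-1 :> R)%R /\
             (forall k, (3 <= k <= d)%N ->
                 (0 <= coord x k)%R /\ (coord x k <= (Lv k)%:Z - 1)%R)].

Definition Lvec (j L l n : nat) (k : nat) : nat :=
  if (k < j)%N then L else if k == j then n else l.

Definition Volj (R : realType) (d : nat) (case2 : bool) (v : nat -> nat)
    (j L l n : nat) : set (d.-tuple int) :=
  @Vol R d case2 v (Lvec j L l n).

Definition ctilde (R : realType) (d : nat) (case2 : bool) (v : nat -> nat)
    (la lb : nat -> R) : R :=
  (1 - \prod_(1 <= k < d.+1)
         (Num.max (1 + expR (- 2 * `|ln (tl case2 v la false k)|))
                  (1 + expR (- 2 * `|ln (tl case2 v lb true k)|)))^-1)^-1.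

(* In the coordinates Y_1 = x_1 + sum_k v(k) x_k, Y_k = x_k (Case 1), resp.
   Y_1 = floor((x_1 + x_2)/2 + sum_k v(k) x_k), Y_2 = floor((x_2 - x_1)/2), Y_k = x_k
   together with the common parity e of x_1 + x_2 and x_2 - x_1 (Case 2), the shell
   Lambda' becomes a product of integer intervals, each with at least two points
   (times the parities), and lambda_s^x = c_s(e) prod_k tilde lambda_{s,k}^{Y_k}.
   So C(Lambda',a) C(Lambda',b) and D := sum_x lambda_a^{2x} lambda_b^{2x} factor over
   the coordinates.  On an interval I with at least two points,
   (1 + g) sum_I (al be)^u <= (sum_I al^u) (sum_I be^u) whenever g <= min(al, 1/al),
   since every u in I has a neighbour in I; for al = tilde lambda^2 one may take
   g = exp(-2 |log tilde lambda|).  With P the product of the maxima over k this gives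
   P D <= C(Lambda',a) C(Lambda',b), and both bounds follow from
   C(Lambda',ab) = C(Lambda',a) C(Lambda',b) - D. *)

From HB Require Import structures.
From mathcomp Require Import all_boot all_order all_algebra.
From mathcomp Require Import boolp classical_sets fsbigop reals sequences exp cardinality.
From mathcomp Require Import zify ring lra.
Set Implicit Arguments. Unset Strict Implicit. Unset Printing Implicit Defensive.
Import Order.TTheory GRing.Theory Num.Theory.
Local Open Scope ring_scope.
Local Open Scope classical_set_scope.

Section PowerSums.
Variables (N lo hi : nat).
Hypotheses (lo_lt_hi : (lo.+1 < hi)%N) (hi_le_N : (hi <= N)%N).

Lemma ler_sum_pair (R : numDomainType) (F : nat -> R) (s t : nat) :
  (forall u, 0 <= F u) -> s != t -> (lo <= s < hi)%N -> (lo <= t < hi)%N ->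
  F s + F t <= \sum_(u < N | (lo <= u < hi)%N) F u.
Proof.
move=> F_ge0 st s_in t_in.
have sN : (s < N)%N by case/andP: s_in => _ /leq_trans; apply.
have tN : (t < N)%N by case/andP: t_in => _ /leq_trans; apply.
rewrite (bigD1 (Ordinal sN)) //= lerD2l.
rewrite (bigD1 (Ordinal tN)) /=; last by rewrite t_in -val_eqE /= eq_sym.
by rewrite lerDl sumr_ge0.
Qed.

(* [u] has a neighbour [u + 1] or [u - 1] in the interval, and [ga * al ^+ u] is
   bounded by both [al ^+ u.+1] and [al ^+ u.-1]. *)
Lemma power_sum_ge_neighbour (R : numFieldType) (al ga : R) (u : nat) :
  0 < al -> ga <= al -> ga <= al^-1 -> (lo <= u < hi)%N ->
  (1 + ga) * al ^+ u <= \sum_(w < N | (lo <= w < hi)%N) al ^+ w.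
Proof.
move=> al_gt0 ga_al ga_alV u_in.
have al_ge0 w : 0 <= al ^+ w by rewrite exprn_ge0 ?ltW.
rewrite mulrDl mul1r.
have [u1_lt_hi | hi_le_u1] := ltnP u.+1 hi.
  apply: le_trans (@ler_sum_pair R _ u u.+1 al_ge0 _ u_in _); last 2 first.
  - by rewrite neq_ltn ltnSn.
  - by case/andP: u_in => lo_u _; rewrite u1_lt_hi (leq_trans lo_u).
  by rewrite lerD2l exprS ler_wpM2r.
have u_gt0 : (0 < u)%N by lia.
apply: le_trans (@ler_sum_pair R _ u u.-1 al_ge0 _ u_in _); last 2 first.
- by rewrite neq_ltn ltn_predL u_gt0 orbT.
- by apply/andP; split; lia.
rewrite lerD2l -{1}(prednK u_gt0) exprS mulrA -[leRHS]mul1r ler_wpM2r //.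
by rewrite -(mulVf (lt0r_neq0 al_gt0)) ler_wpM2r // ltW.
Qed.

Lemma mul_power_sums_ge (R : numFieldType) (al be ga : R) :
  0 < al -> 0 < be -> ga <= al -> ga <= al^-1 ->
  (1 + ga) * \sum_(u < N | (lo <= u < hi)%N) (al ^+ u * be ^+ u) <=
  (\sum_(u < N | (lo <= u < hi)%N) al ^+ u) * (\sum_(u < N | (lo <= u < hi)%N) be ^+ u).
Proof.
move=> al_gt0 be_gt0 ga_al ga_alV.
rewrite !mulr_sumr; apply: ler_sum => u u_in.
rewrite mulrA; apply: ler_wpM2r; first by rewrite exprn_ge0 ?ltW.
exact: power_sum_ge_neighbour.
Qed.

Lemma expR_neg2_abs_ln_le (R : realType) (t : R) : 0 < t ->
  expR (- 2 * `|ln t|) <= t ^+ 2 /\ expR (- 2 * `|ln t|) <= (t ^+ 2)^-1.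
Proof.
move=> t_gt0.
have -> : t ^+ 2 = expR (ln t + ln t) by rewrite expRD lnK ?expr2 // posrE.
by rewrite -expRN !ler_expR; case: (ler0P (ln t)) => ?; split; lra.
Qed.

Lemma mul_sq_power_sums_ge (R : realType) (ta tb : R) : 0 < ta -> 0 < tb ->
  Num.max (1 + expR (- 2 * `|ln ta|)) (1 + expR (- 2 * `|ln tb|)) *
    \sum_(u < N | (lo <= u < hi)%N) ((ta ^+ 2) ^+ u * (tb ^+ 2) ^+ u) <=
  (\sum_(u < N | (lo <= u < hi)%N) (ta ^+ 2) ^+ u) *
  (\sum_(u < N | (lo <= u < hi)%N) (tb ^+ 2) ^+ u).
Proof.
move=> ta_gt0 tb_gt0.
have [ga_a gaV_a] := expR_neg2_abs_ln_le ta_gt0.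
have [ga_b gaV_b] := expR_neg2_abs_ln_le tb_gt0.
case: (leP (1 + expR (- 2 * `|ln ta|)) (1 + expR (- 2 * `|ln tb|))) => _.
  rewrite [leRHS]mulrC; under eq_bigr do rewrite mulrC.
  by apply: mul_power_sums_ge; rewrite ?exprn_gt0.
by apply: mul_power_sums_ge; rewrite ?exprn_gt0.
Qed.

End PowerSums.

Section Boxes.
Variables (d N : nat).
Implicit Types (Q : 'I_d -> pred nat).
Local Notation box := {ffun 'I_d -> 'I_N}.

Lemma sum_box_prod (R : comPzSemiRingType) Q (W : 'I_d -> nat -> R) :
  \sum_(f : box | [forall i, Q i (f i)]) \prod_i W i (f i) =
  \prod_i \sum_(t < N | Q i t) W i t.
Proof.
rewrite (bigA_distr_big_dep (fun i (t : 'I_N) => Q i t) (fun i (t : 'I_N) => W i t)).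
by apply: eq_bigl => f; apply/forallP/familyP => Qf i; have := Qf i.
Qed.

Lemma box_sums_gap (R : numDomainType) Q (Wa Wb : 'I_d -> nat -> R) (c : 'I_d -> R) :
  (forall i, 0 <= c i) -> (forall i t, 0 <= Wa i t) -> (forall i t, 0 <= Wb i t) ->
  (forall i, c i * \sum_(t < N | Q i t) (Wa i t * Wb i t) <=
             (\sum_(t < N | Q i t) Wa i t) * (\sum_(t < N | Q i t) Wb i t)) ->
  (\prod_i c i) * \sum_(f : box | [forall i, Q i (f i)])
       ((\prod_i Wa i (f i)) * (\prod_i Wb i (f i))) <=
  (\sum_(f : box | [forall i, Q i (f i)]) \prod_i Wa i (f i)) *
  (\sum_(f : box | [forall i, Q i (f i)]) \prod_i Wb i (f i)).
Proof.
move=> c_ge0 Wa_ge0 Wb_ge0 gap.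
rewrite (eq_bigr (fun f : box => \prod_i (Wa i (f i) * Wb i (f i)))); last first.
  by move=> f _; rewrite big_split.
rewrite !sum_box_prod (sum_box_prod Q (fun i t => Wa i t * Wb i t)) -!big_split /=.
apply: ler_prod => i _.
by rewrite gap andbT mulr_ge0 // sumr_ge0 // => t _; rewrite mulr_ge0.
Qed.

End Boxes.

Section FiniteSums.
Variable T : choiceType.

Lemma fsum_offdiag (R : pzRingType) (A : set T) (a b : T -> R) : finite_set A ->
  \sum_(x \in A) \sum_(y \in A `\ x) (a x * b y) =
  (\sum_(x \in A) a x) * (\sum_(y \in A) b y) - \sum_(x \in A) (a x * b x).
Proof.
move=> finA.
rewrite (eq_fsbigr (fun x => \sum_(y \in A) (a x * b y) - a x * b x)); last first.
  by move=> x /set_mem Ax; rewrite (fsbigD1 x A) // [RHS]addrC addKr.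
rewrite !fsbig_finite //= sumrB mulr_suml.
by congr (_ - _); apply: eq_bigr => x _; rewrite mulr_sumr fsbig_finite.
Qed.

Lemma fsbig_inj_image (R : nmodType) (I : finType) (P : pred I) (h : I -> T) (F : T -> R) :
  {in P &, injective h} ->
  \sum_(x \in h @` [set i | P i]) F x = \sum_(i | P i) F (h i).
Proof.
move=> h_inj; rewrite fsbig_image; last by move=> p q /set_mem Pp /set_mem Pq; apply: h_inj.
rewrite -(@bigfs _ _ _ _ (index_enum I) P (F \o h) (index_enum_uniq I)) //.
by move=> i _; rewrite mem_index_enum.
Qed.

Lemma offdiag_sum_bounds (R : realFieldType) (A : set T) (a b : T -> R) (P : R) :
  finite_set A -> (forall x, 0 <= a x) -> (forall x, 0 <= b x) -> 1 < P ->
  P * \sum_(x \in A) (a x * b x) <= (\sum_(x \in A) a x) * (\sum_(x \in A) b x) ->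
  let C := \sum_(x \in A) \sum_(y \in A `\ x) (a x * b y) in
  C <= (\sum_(x \in A) a x) * (\sum_(x \in A) b x) /\
  (\sum_(x \in A) a x) * (\sum_(x \in A) b x) <= (1 - P^-1)^-1 * C.
Proof.
move=> finA a_ge0 b_ge0 P_gt1 gap C; rewrite /C fsum_offdiag //.
set X := _ * _; set D := \sum_(x \in A) _ in gap *.
have D_ge0 : 0 <= D by apply: fsumr_ge0 => x _; rewrite mulr_ge0.
have P_gt0 : 0 < P by apply: lt_trans P_gt1.
have PV_lt1 : P^-1 < 1 by rewrite invf_lt1.
have D_le : D <= P^-1 * X by rewrite ler_pdivlMl.
split; first by lra.
rewrite ler_pdivlMl; last by lra.
have -> : (1 - P^-1) * X = X - P^-1 * X by ring.
by lra.
Qed.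

End FiniteSums.

Lemma pair_sums_gap (R : realDomainType) (I J : finType) (E : pred I) (Q : pred J)
    (c : I -> R) (A B : J -> R) (P : R) :
  (exists e, E e) -> (forall e, 0 <= c e) -> (forall f, 0 <= A f) -> (forall f, 0 <= B f) ->
  P * \sum_(f | Q f) (A f * B f) <= (\sum_(f | Q f) A f) * (\sum_(f | Q f) B f) ->
  P * \sum_(p | E p.1 && Q p.2) (A p.2 * (c p.1 * B p.2)) <=
  (\sum_(p | E p.1 && Q p.2) A p.2) * (\sum_(p | E p.1 && Q p.2) (c p.1 * B p.2)).
Proof.
move=> [e0 Ee0] c_ge0 A_ge0 B_ge0 gap.
rewrite -(pair_big E Q (fun e f => A f * (c e * B f))) -(pair_big E Q (fun _ f => A f)).
rewrite -(pair_big E Q (fun e f => c e * B f)) /= -big_distrlr /=.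
under eq_bigr do under eq_bigr do rewrite mulrCA.
under eq_bigr do rewrite -mulr_sumr.
have -> : \sum_(e | E e) \sum_(f | Q f) A f = (\sum_(e | E e) 1) * \sum_(f | Q f) A f.
  by rewrite mulr_suml; under [RHS]eq_bigr do rewrite mul1r.
rewrite -mulr_suml mulrCA [leRHS]mulrCA.
apply: ler_wpM2l; first by rewrite sumr_ge0.
have S_ge1 : 1 <= \sum_(e | E e) (1 : R) by rewrite (bigD1 e0) //= lerDl sumr_ge0.
apply: le_trans gap _; rewrite -mulrA -[leLHS]mul1r; apply: ler_wpM2r => //.
by rewrite mulr_ge0 ?sumr_ge0.
Qed.

Section LatticeCoordinates.
Variable d : nat.

Definition of_coords (X : nat -> int) : d.-tuple int := [tuple X i.+1 | i < d].

Lemma index_ord k : (1 <= k <= d)%N -> exists i : 'I_d, k = i.+1.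
Proof.
move=> /andP[k_ge1 k_le_d]; have k_lt : (k.-1 < d)%N by rewrite prednK.
by exists (Ordinal k_lt); rewrite /= prednK.
Qed.

Lemma coord_of_coords X k : (1 <= k <= d)%N -> coord (of_coords X) k = X k.
Proof. by move=> /index_ord[i ->]; rewrite /coord -[i.+1.-1]/(nat_of_ord i) nth_mktuple. Qed.

Lemma eq_coords (x y : d.-tuple int) :
  (forall k, (1 <= k <= d)%N -> coord x k = coord y k) -> x = y.
Proof.
move=> xy; apply: eq_from_tnth => i; rewrite !(tnth_nth 0).
by have := xy i.+1; rewrite /coord ltn_ord; apply.
Qed.

Variable N : nat.

(* The sum has the single term [f (k - 1)] when [1 <= k <= d] and is empty otherwise. *)
Definition ffun_coords (f : {ffun 'I_d -> 'I_N}) (k : nat) : int :=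
  \sum_(i < d | i.+1 == k) (f i : nat)%:Z.

Lemma ffun_coordsE f (i : 'I_d) : ffun_coords f i.+1 = (f i : nat)%:Z.
Proof. by rewrite /ffun_coords (eq_bigl (pred1 i)) ?big_pred1_eq. Qed.

Lemma ffun_coords_inj (f g : {ffun 'I_d -> 'I_N}) :
  (forall k, (1 <= k <= d)%N -> ffun_coords f k = ffun_coords g k) -> f = g.
Proof.
move=> fg; apply/ffunP => i; apply: val_inj; have := fg i.+1.
by rewrite !ffun_coordsE ltn_ord => /(_ isT) [].
Qed.

End LatticeCoordinates.
Arguments of_coords {d}.

Lemma ffun_coords_onto d N (Y : nat -> int) :
  (forall k, (1 <= k <= d)%N -> 0 <= Y k < N%:Z) ->
  exists f : {ffun 'I_d -> 'I_N.+1}, forall k, (1 <= k <= d)%N -> ffun_coords f k = Y k.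
Proof.
move=> Y_in; exists [ffun i : 'I_d => inord (absz (Y i.+1))] => k k_in.
have /andP[] := Y_in k k_in; case/index_ord: k_in => i -> Yk_ge0 Yk_lt.
by rewrite ffun_coordsE ffunE inordK ?gez0_abs //; lia.
Qed.

Definition shell_lo (j m k : nat) : nat := if k == j then m else 0%N.

Lemma box_setD d j L l m n (Y : nat -> int) : (1 <= j <= d)%N ->
  ((forall k, (1 <= k <= d)%N -> 0 <= Y k < (Lvec j L l n k)%:Z) /\
   ~ (forall k, (1 <= k <= d)%N -> 0 <= Y k < (Lvec j L l m k)%:Z)) <->
  (forall k, (1 <= k <= d)%N -> (shell_lo j m k)%:Z <= Y k < (Lvec j L l n k)%:Z).
Proof.
move=> j_in; rewrite /shell_lo /Lvec; split.
  move=> [in_n not_in_m] k k_in; have := in_n k k_in.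
  case: eqP => [->|//]; rewrite ltnn => /andP[_ ->]; rewrite andbT.
  case: (lerP m%:Z (Y j)) => // Yj_lt; exfalso; apply: not_in_m => k' k'_in.
  by have := in_n k' k'_in; case: ifP => //; case: eqP => [->|] // _ /andP[-> _] /=.
move=> in_shell; split.
  move=> k k_in; have := in_shell k k_in; case: eqP => // _ /andP[lo_le ->].
  by rewrite andbT (le_trans _ lo_le).
move=> in_m; have := in_shell j j_in; have := in_m j j_in.
by rewrite eqxx ltnn; lia.
Qed.

Lemma prodr_gt1 (R : numDomainType) (a b : nat) (F : nat -> R) :
  (a < b)%N -> (forall k, 1 < F k) -> 1 < \prod_(a <= k < b) F k.
Proof.
move=> ab F_gt1; rewrite big_ltn //.
have rest_ge1 : 1 <= \prod_(a.+1 <= k < b) F k.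
  by apply: (big_ind (fun x => 1 <= x)) => // [x y|k _]; [exact: mulr_ege1 | exact: ltW].
by apply: lt_le_trans (F_gt1 a) _; rewrite ler_peMr // ltW // (lt_trans ltr01).
Qed.

Lemma prod_exprz_ffun_coords_sq (R : comUnitRingType) d N (t : nat -> R)
    (f : {ffun 'I_d -> 'I_N}) :
  (\prod_(1 <= k < d.+1) t k ^ ffun_coords f k) ^+ 2 = \prod_(i < d) (t i.+1 ^+ 2) ^+ f i.
Proof.
rewrite big_add1 big_mkord -prodrXl; apply: eq_bigr => i _.
by rewrite ffun_coordsE -!exprM mulnC.
Qed.

Definition gap_factor (R : realType) d case2 v (la lb : nat -> R) : R :=
  \prod_(1 <= k < d.+1) Num.max (1 + expR (- 2 * `|ln (tl case2 v la false k)|))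
                                (1 + expR (- 2 * `|ln (tl case2 v lb true k)|)).

Lemma ctildeE (R : realType) d case2 v (la lb : nat -> R) :
  ctilde d case2 v la lb = (1 - (gap_factor d case2 v la lb)^-1)^-1.
Proof. by rewrite /ctilde prodfV. Qed.

Lemma gap_factor_gt1 (R : realType) d case2 v (la lb : nat -> R) :
  (1 <= d)%N -> 1 < gap_factor d case2 v la lb.
Proof. by move=> d_ge1; apply: prodr_gt1 => // k; rewrite lt_max ltrDl expR_gt0. Qed.

Section Chart.
Variables (R : realType) (d : nat) (case2 : bool) (v : nat -> nat) (la lb : nat -> R).
Variables (E : pred bool) (cb : bool -> R) (chart : bool -> (nat -> int) -> d.-tuple int).
Variables (box_coord : d.-tuple int -> nat -> int) (parity : d.-tuple int -> bool).

Hypothesis Vol_box : forall Lv x, @Vol R d case2 v Lv x <->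
  forall k, (1 <= k <= d)%N -> 0 <= box_coord x k < (Lv k)%:Z.
Hypothesis box_coord_chart : forall e Y k, E e -> (1 <= k <= d)%N ->
  box_coord (chart e Y) k = Y k.
Hypothesis parity_chart : forall e Y, E e -> parity (chart e Y) = e.
Hypothesis E_parity : forall x, E (parity x).
Hypothesis chart_coordsK : forall x, chart (parity x) (box_coord x) = x.
Hypothesis eq_chart : forall e Y Y', (forall k, (1 <= k <= d)%N -> Y k = Y' k) ->
  chart e Y = chart e Y'.
Hypothesis lpow_la_chart : forall e Y, E e ->
  lpow la (chart e Y) = \prod_(1 <= k < d.+1) tl case2 v la false k ^ Y k.
Hypothesis lpow_lb_chart : forall e Y, E e ->
  lpow lb (chart e Y) = cb e * \prod_(1 <= k < d.+1) tl case2 v lb true k ^ Y k.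
Hypothesis tilde_gt0 : forall k, (1 <= k <= d)%N ->
  0 < tl case2 v la false k /\ 0 < tl case2 v lb true k.

Variables (j L l m n : nat).
Hypotheses (j_in : (1 <= j <= d)%N) (l_ge2 : (2 <= l)%N) (l_le_L : (l <= L)%N).
Hypothesis n_sub_m : (2 <= n - m)%N.

Let shell := @Volj R d case2 v j L l n `\` @Volj R d case2 v j L l m.
Local Notation box := {ffun 'I_d -> 'I_(L + l + n).+1}.
Let in_shell (p : bool * box) :=
  E p.1 && [forall i : 'I_d, shell_lo j m i.+1 <= p.2 i < Lvec j L l n i.+1]%N.
Let shell_point (p : bool * box) := chart p.1 (ffun_coords p.2).

Lemma shell_lo_lt_Lvec k : ((shell_lo j m k).+1 < Lvec j L l n k)%N.
Proof. by rewrite /shell_lo /Lvec; case: (ltngtP k j); lia. Qed.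

Lemma Lvec_le k : (Lvec j L l n k <= L + l + n)%N.
Proof. by rewrite /Lvec; case: (ltngtP k j); lia. Qed.

Lemma shell_box x : shell x <-> forall k, (1 <= k <= d)%N ->
  (shell_lo j m k)%:Z <= box_coord x k < (Lvec j L l n k)%:Z.
Proof.
rewrite -box_setD //; split.
  by move=> [/Vol_box in_n not_in_m]; split => // /Vol_box.
by move=> [in_n not_in_m]; split; [apply/Vol_box | move=> /Vol_box].
Qed.

Lemma shell_image : shell = shell_point @` [set p | in_shell p].
Proof.
apply/seteqP; split => [x /shell_box x_in | _ [[e f] /andP[/= Ee /forallP f_in] <-]].
  have [f f_coords] : exists f : box,
      forall k, (1 <= k <= d)%N -> ffun_coords f k = box_coord x k.
    by apply: ffun_coords_onto => k k_in; have := x_in k k_in; have := Lvec_le k; lia.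
  exists (parity x, f); last by rewrite /shell_point /= -[RHS]chart_coordsK; apply: eq_chart.
  rewrite /in_shell /= E_parity; apply/forallP => i.
  by have := x_in i.+1 (ltn_ord i); rewrite -(f_coords i.+1 (ltn_ord i)) ffun_coordsE; lia.
apply/shell_box => k k_in; rewrite box_coord_chart //.
by case/index_ord: k_in => i ->; rewrite ffun_coordsE; have := f_in i; rewrite /=; lia.
Qed.

Lemma shell_point_inj : {in in_shell &, injective shell_point}.
Proof.
move=> [e1 f1] [e2 f2] /andP[/= E1 _] /andP[/= E2 _]; rewrite /shell_point /= => eq12.
congr pair; first by rewrite -(parity_chart (ffun_coords f1) E1) eq12 parity_chart.
apply: ffun_coords_inj => k k_in.
by rewrite -(box_coord_chart (ffun_coords f1) E1 k_in) eq12 box_coord_chart.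
Qed.

Lemma finite_shell : finite_set shell.
Proof. by rewrite shell_image; apply/finite_image/finite_finset. Qed.

Lemma shell_gap : finite_set shell /\
  gap_factor d case2 v la lb * \sum_(x \in shell) (lpow la x ^+ 2 * lpow lb x ^+ 2) <=
  Cs la shell * Cs lb shell.
Proof.
split; first exact: finite_shell.
rewrite /Cs shell_image !(fsbig_inj_image _ shell_point_inj).
pose ta i := tl case2 v la false i.+1; pose tb i := tl case2 v lb true i.+1.
pose A (f : box) := \prod_(i < d) (ta i ^+ 2) ^+ f i.
pose B (f : box) := \prod_(i < d) (tb i ^+ 2) ^+ f i.
have la_sq p : in_shell p -> lpow la (shell_point p) ^+ 2 = A p.2.
  by case/andP=> Ep _; rewrite lpow_la_chart // prod_exprz_ffun_coords_sq.
have lb_sq p : in_shell p -> lpow lb (shell_point p) ^+ 2 = cb p.1 ^+ 2 * B p.2.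
  by case/andP=> Ep _; rewrite lpow_lb_chart // exprMn prod_exprz_ffun_coords_sq.
rewrite (eq_bigr (fun p => A p.2 * (cb p.1 ^+ 2 * B p.2))); last first.
  by move=> p in_p; rewrite la_sq ?lb_sq.
rewrite (eq_bigr (fun p => A p.2) la_sq) (eq_bigr (fun p => cb p.1 ^+ 2 * B p.2) lb_sq).
rewrite /in_shell; apply: (pair_sums_gap (c := fun e => cb e ^+ 2) (A := A) (B := B)
  (Q := fun f : box => [forall i : 'I_d, shell_lo j m i.+1 <= f i < Lvec j L l n i.+1]%N)).
- by exists (parity (of_coords (fun=> 0))).
- by move=> e; apply: sqr_ge0.
- by move=> f; apply: prodr_ge0 => i _; rewrite exprn_ge0 ?sqr_ge0.
- by move=> f; apply: prodr_ge0 => i _; rewrite exprn_ge0 ?sqr_ge0.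
rewrite /gap_factor big_add1 big_mkord.
apply: (box_sums_gap (Wa := fun i t => (ta i ^+ 2) ^+ t) (Wb := fun i t => (tb i ^+ 2) ^+ t)
  (Q := fun i t => shell_lo j m i.+1 <= t < Lvec j L l n i.+1)%N).
- by move=> i; rewrite le_max addr_ge0 ?ler01 ?expR_ge0.
- by move=> i t; rewrite exprn_ge0 ?sqr_ge0.
- by move=> i t; rewrite exprn_ge0 ?sqr_ge0.
move=> i; have [ta_gt0 tb_gt0] := tilde_gt0 (ltn_ord i : (1 <= i.+1 <= d)%N).
by apply: mul_sq_power_sums_ge; [exact: shell_lo_lt_Lvec | exact: leqW (Lvec_le _) | |].
Qed.

End Chart.

Lemma exprz_sumr (R : fieldType) (b : R) (r : seq nat) (F : nat -> int) : b != 0 ->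
  b ^ (\sum_(k <- r) F k) = \prod_(k <- r) b ^ F k.
Proof.
move=> b_neq0; have b_unit : b \is a GRing.unit by rewrite unitfE.
exact: (big_morph (fun z : int => b ^ z) (exprzDr b_unit) (expr0z b)).
Qed.

Lemma prod_exprz_twist (R : fieldType) (b : R) (l : nat -> R) (v : nat -> nat)
    (Y : nat -> int) s t :
  b != 0 -> (forall k, (s <= k < t)%N -> l k != 0) ->
  b ^ (- \sum_(s <= k < t) (v k)%:Z * Y k) * \prod_(s <= k < t) l k ^ Y k =
  \prod_(s <= k < t) (l k * b ^- v k) ^ Y k.
Proof.
move=> b_neq0 l_neq0; rewrite -sumrN exprz_sumr // -big_split /=.
rewrite big_seq_cond [RHS]big_seq_cond; apply: eq_bigr => k /andP[+ _].
rewrite mem_index_iota => /l_neq0 lk_neq0.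
rewrite exprzMl ?unitfE ?invr_neq0 ?expf_neq0 //.
by rewrite exprnN exprz_exp mulNr mulrC.
Qed.

Lemma lpow_of_coords (R : realType) d (l : nat -> R) (X : nat -> int) :
  lpow l (@of_coords d X) = \prod_(1 <= k < d.+1) l k ^ X k.
Proof.
rewrite /lpow big_nat_cond [RHS]big_nat_cond; apply: eq_bigr => k /andP[k_in _].
by rewrite coord_of_coords // -ltnS.
Qed.

Lemma tl_gt0 (R : realType) d (case2 : bool) (v : nat -> nat) (l : nat -> R) s k :
  (forall k, (1 <= k <= d)%N -> 0 < l k) -> case2 ==> (2 <= d)%N -> (1 <= k <= d)%N ->
  0 < tl case2 v l s k.
Proof.
move=> l_gt0 case2_d k_in; have l1_gt0 : 0 < l 1%N by apply: l_gt0; lia.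
rewrite /tl /tl1; case: case2 case2_d => /= [d_ge2|_].
  have l2_gt0 : 0 < l 2%N by apply: l_gt0; lia.
  case: eqP => _; first by case: s.
  case: eqP => _; first by case: s; rewrite ?invr_gt0.
  by rewrite divr_gt0 ?l_gt0 // exprn_gt0 //; case: s.
by case: eqP => _ //; rewrite divr_gt0 ?l_gt0 // exprn_gt0.
Qed.

Section Chart1.
Variables (d : nat) (v : nat -> nat).

Definition shear1 (Y : nat -> int) : int := \sum_(2 <= k < d.+1) (v k)%:Z * Y k.

Definition chart1 (Y : nat -> int) : d.-tuple int :=
  of_coords (fun k => if k == 1%N then Y 1%N - shear1 Y else Y k).

Definition coords1 (x : d.-tuple int) (k : nat) : int :=
  if k == 1%N then coord x 1 + shear1 (coord x) else coord x k.

Lemma eq_shear1 (Y Y' : nat -> int) :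
  (forall k, (2 <= k <= d)%N -> Y k = Y' k) -> shear1 Y = shear1 Y'.
Proof.
move=> YY'; rewrite /shear1 big_nat_cond [RHS]big_nat_cond; apply: eq_bigr => k /andP[k_in _].
by rewrite YY' // -ltnS.
Qed.

Lemma shear1_chart1 (Y : nat -> int) : shear1 (coord (chart1 Y)) = shear1 Y.
Proof.
apply: eq_shear1 => k /andP[k_ge2 k_le_d].
by rewrite coord_of_coords ?gtn_eqF //; lia.
Qed.

Lemma Vol1_box (R : realType) (Lv : nat -> nat) (x : d.-tuple int) : (1 <= d)%N ->
  @Vol R d false v Lv x <-> forall k, (1 <= k <= d)%N -> 0 <= coords1 x k < (Lv k)%:Z.
Proof.
move=> d_ge1; rewrite /Vol /= -/(shear1 (coord x)) /coords1; split.
  move=> [lo1 [hi1 others]] k /andP[k_ge1 k_le_d]; case: eqP => [->|k_ne1]; first by lia.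
  by have [|lok hik] := others k; lia.
move=> in_box; have /= in1 := in_box 1%N d_ge1.
split; [lia | split; [lia | move=> k /andP[k_ge2 k_le_d]]].
by have := in_box k; rewrite k_le_d (leq_trans _ k_ge2) // gtn_eqF // => /(_ isT); lia.
Qed.

Lemma coords1_chart1 (Y : nat -> int) k : (1 <= k <= d)%N -> coords1 (chart1 Y) k = Y k.
Proof.
move=> k_in; rewrite /coords1 shear1_chart1.
have [k1 | k_ne1] := eqVneq k 1%N; last by rewrite coord_of_coords // (negPf k_ne1).
by rewrite k1 in k_in *; rewrite coord_of_coords //= subrK.
Qed.

Lemma chart1_coordsK (x : d.-tuple int) : chart1 (coords1 x) = x.
Proof.
apply: eq_coords => k k_in; rewrite coord_of_coords // /coords1.
case: eqP => [->|//]; rewrite eqxx (@eq_shear1 _ (coord x)) ?addrK //.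
by move=> k' /andP[k'_ge2 _]; rewrite gtn_eqF.
Qed.

Lemma eq_chart1 (Y Y' : nat -> int) :
  (forall k, (1 <= k <= d)%N -> Y k = Y' k) -> chart1 Y = chart1 Y'.
Proof.
move=> YY'; apply: eq_coords => k k_in; rewrite !coord_of_coords //.
rewrite (@eq_shear1 Y Y') => [|k' /andP[k'_ge2 k'_le_d]]; last by apply: YY'; lia.
by move: k_in; have [->|_] := eqVneq k 1%N => k_in; rewrite YY'.
Qed.

Lemma lpow_chart1 (R : realType) (l : nat -> R) (s : bool) (Y : nat -> int) :
  (1 <= d)%N -> (forall k, (1 <= k <= d)%N -> 0 < l k) ->
  lpow l (chart1 Y) = \prod_(1 <= k < d.+1) tl false v l s k ^ Y k.
Proof.
move=> d_ge1 l_gt0; have l_neq0 k : (1 <= k <= d)%N -> l k != 0 by move/l_gt0/lt0r_neq0.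
rewrite lpow_of_coords big_ltn // [RHS]big_ltn // /tl /=.
rewrite exprzDr ?unitfE ?l_neq0 // -mulrA; congr (_ * _).
rewrite (eq_big_nat _ _ (F2 := fun k => l k ^ Y k)) => [|k /andP[k_ge2 _]]; last by rewrite gtn_eqF.
rewrite [RHS](eq_big_nat _ _ (F2 := fun k => (l k * l 1%N ^- v k) ^ Y k)); last first.
  by move=> k /andP[k_ge2 _]; rewrite gtn_eqF.
by rewrite prod_exprz_twist ?l_neq0 // => k k_in; apply: l_neq0; lia.
Qed.

End Chart1.

Lemma divz2_mod (S : int) : S = (S %/ 2)%Z * 2 + (S %% 2)%Z /\ 0 <= (S %% 2)%Z < 2.
Proof. by split; [exact: divz_eq | rewrite modz_ge0 // ltz_pmod]. Qed.

Lemma divz2P (S q r : int) : S = 2 * q + r -> 0 <= r < 2 -> (S %/ 2)%Z = q /\ (S %% 2)%Z = r.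
Proof. by have := divz2_mod S; move: (S %/ 2)%Z (S %% 2)%Z => a b; lia. Qed.

Lemma divz2_range (S : int) (L : nat) :
  (0 <= S <= 2 * L%:Z - 1) = (0 <= (S %/ 2)%Z < L%:Z).
Proof.
have := divz2_mod S; move: (S %/ 2)%Z (S %% 2)%Z => a b S_eq.
by apply/idP/idP => /andP[? ?]; apply/andP; split; lia.
Qed.

Lemma half_bounds (R : realFieldType) (S : int) (L : nat) :
  (0 <= S%:~R / 2 :> R) /\ (S%:~R / 2 <= L%:R - 2^-1 :> R) <-> (0 <= S <= 2 * L%:Z - 1).
Proof.
rewrite -(ler0z R) -(ler_int R) rmorphB rmorphM /= -[2%:~R]/(2 : R).
by split => [[? ?]|/andP[? ?]]; [apply/andP; split|split]; lra.
Qed.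

Section Chart2.
Variables (d : nat) (v : nat -> nat).

Definition shear2 (Y : nat -> int) : int := \sum_(3 <= k < d.+1) (v k)%:Z * Y k.

(* [x_1 + x_2 + 2 shear2 x = 2 Y_1 + e] and [x_2 - x_1 = 2 Y_2 + e]: the two diagonal
   coordinates of a lattice point have the same parity [e]. *)
Definition chart2 (e : bool) (Y : nat -> int) : d.-tuple int :=
  of_coords (fun k => if k == 1%N then Y 1%N - Y 2%N - shear2 Y
    else if k == 2%N then Y 1%N + Y 2%N + (e : nat)%:Z - shear2 Y else Y k).

Definition diag_sum (x : d.-tuple int) : int :=
  coord x 1 + coord x 2 + 2 * shear2 (coord x).

Definition diag_diff (x : d.-tuple int) : int := coord x 2 - coord x 1.

Definition coords2 (x : d.-tuple int) (k : nat) : int :=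
  if k == 1%N then (diag_sum x %/ 2)%Z
  else if k == 2%N then (diag_diff x %/ 2)%Z else coord x k.

Definition parity2 (x : d.-tuple int) : bool := (diag_diff x %% 2)%Z == 1.

Lemma eq_shear2 (Y Y' : nat -> int) :
  (forall k, (3 <= k <= d)%N -> Y k = Y' k) -> shear2 Y = shear2 Y'.
Proof.
move=> YY'; rewrite /shear2 big_nat_cond [RHS]big_nat_cond.
by apply: eq_bigr => k /andP[k_in _]; rewrite YY' // -ltnS.
Qed.

Lemma shear2_chart2 e (Y : nat -> int) : shear2 (coord (chart2 e Y)) = shear2 Y.
Proof.
apply: eq_shear2 => k /andP[k_ge3 k_le_d].
by rewrite coord_of_coords ?gtn_eqF // ?(leq_trans _ k_ge3) //; lia.
Qed.

Lemma Vol2_box (R : realType) (Lv : nat -> nat) (x : d.-tuple int) : (2 <= d)%N ->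
  @Vol R d true v Lv x <-> forall k, (1 <= k <= d)%N -> 0 <= coords2 x k < (Lv k)%:Z.
Proof.
move=> d_ge2.
have sumE : ((coord x 1)%:~R + (coord x 2)%:~R) / 2 +
    \sum_(3 <= k < d.+1) (v k)%:R * (coord x k)%:~R = (diag_sum x)%:~R / 2 :> R.
  rewrite /diag_sum /shear2 !rmorphD !rmorphM rmorph_sum /=.
  under [in RHS]eq_bigr do rewrite rmorphM.
  by rewrite -[2%:~R]/(2 : R); field.
have diffE : ((coord x 2)%:~R - (coord x 1)%:~R) / 2 = (diag_diff x)%:~R / 2 :> R.
  by rewrite /diag_diff rmorphB.
rewrite /Vol /= sumE diffE /coords2; split.
  move=> [s_lo [s_hi [t_lo [t_hi others]]]] k /andP[k_ge1 k_le_d].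
  case: eqP => [->|k_ne1]; first by rewrite -divz2_range; apply/(half_bounds R); split.
  case: eqP => [->|k_ne2]; first by rewrite -divz2_range; apply/(half_bounds R); split.
  by have [|? ?] := others k; [apply/andP; split; lia | lia].
move=> in_box; have /= := in_box 1%N (ltnW d_ge2); rewrite -divz2_range => /(half_bounds R)[? ?].
have /= := in_box 2%N d_ge2; rewrite -divz2_range => /(half_bounds R)[? ?].
do 4!split => //; move=> k /andP[k_ge3 k_le_d].
by have := in_box k; rewrite k_le_d !gtn_eqF ?(leq_trans _ k_ge3) // => /(_ isT); lia.
Qed.

Lemma diag_chart2 e (Y : nat -> int) : (2 <= d)%N ->
  diag_sum (chart2 e Y) = 2 * Y 1%N + (e : nat)%:Z /\
  diag_diff (chart2 e Y) = 2 * Y 2%N + (e : nat)%:Z.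
Proof.
move=> d_ge2; rewrite /diag_sum /diag_diff shear2_chart2 !coord_of_coords //=; last by lia.
by split; ring.
Qed.

Lemma coords2_chart2 e (Y : nat -> int) k : (2 <= d)%N -> (1 <= k <= d)%N ->
  coords2 (chart2 e Y) k = Y k.
Proof.
move=> d_ge2 k_in; have [sumE diffE] := diag_chart2 e Y d_ge2.
have e_in : 0 <= (e : nat)%:Z < 2 by case: e {sumE diffE}.
rewrite /coords2; case: eqP => [->|k_ne1]; first by have [] := divz2P sumE e_in.
case: eqP => [->|k_ne2]; first by have [] := divz2P diffE e_in.
by rewrite coord_of_coords // (introF eqP k_ne1) (introF eqP k_ne2).
Qed.

Lemma parity2_chart2 e (Y : nat -> int) : (2 <= d)%N -> parity2 (chart2 e Y) = e.
Proof.
move=> d_ge2; have [_ diffE] := diag_chart2 e Y d_ge2.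
have e_in : 0 <= (e : nat)%:Z < 2 by case: e {diffE}.
by rewrite /parity2 (divz2P diffE e_in).2; case: e {diffE e_in}.
Qed.

Lemma chart2_coordsK (x : d.-tuple int) : (2 <= d)%N -> chart2 (parity2 x) (coords2 x) = x.
Proof.
move=> d_ge2.
have shearE : shear2 (coords2 x) = shear2 (coord x).
  by apply: eq_shear2 => k /andP[k_ge3 _]; rewrite /coords2 !gtn_eqF // (leq_trans _ k_ge3).
apply: eq_coords => k k_in; rewrite coord_of_coords // shearE /parity2 /coords2 /=.
have sumE : diag_sum x = coord x 1 + coord x 2 + 2 * shear2 (coord x) by [].
have diffE : diag_diff x = coord x 2 - coord x 1 by [].
have := divz2_mod (diag_sum x); have := divz2_mod (diag_diff x).
move: (diag_sum x %/ 2)%Z (diag_sum x %% 2)%Z (diag_diff x %/ 2)%Z (diag_diff x %% 2)%Z.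
move: (diag_sum x) (diag_diff x) (shear2 (coord x)) sumE diffE => S T V -> -> a b a' b' *.
case: eqP => [->|k_ne1]; first by lia.
by case: eqP => [->|k_ne2]; first by case: eqP; lia.
Qed.

Lemma eq_chart2 e (Y Y' : nat -> int) : (2 <= d)%N ->
  (forall k, (1 <= k <= d)%N -> Y k = Y' k) -> chart2 e Y = chart2 e Y'.
Proof.
move=> d_ge2 YY'; apply: eq_coords => k k_in; rewrite !coord_of_coords //.
rewrite (@eq_shear2 Y Y') => [|k' /andP[k'_ge3 k'_le_d]]; last by apply: YY'; lia.
by rewrite (YY' 1%N) ?(YY' 2%N) ?(YY' k) //; lia.
Qed.

Lemma lpow_chart2 (R : realType) e (l : nat -> R) (Y : nat -> int) : (2 <= d)%N ->
  lpow l (chart2 e Y) =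
  l 1%N ^ (Y 1%N - Y 2%N - shear2 Y) *
  (l 2%N ^ (Y 1%N + Y 2%N + (e : nat)%:Z - shear2 Y) * \prod_(3 <= k < d.+1) l k ^ Y k).
Proof.
move=> d_ge2; rewrite lpow_of_coords big_ltn; last by lia.
rewrite big_ltn /=; last by lia.
congr (_ * (_ * _)); apply: eq_big_nat => k /andP[k_ge3 _].
by rewrite !gtn_eqF // (leq_trans _ k_ge3).
Qed.

Lemma lpow_chart2_a (R : realType) e (l : nat -> R) (Y : nat -> int) :
  (2 <= d)%N -> (forall k, (1 <= k <= d)%N -> 0 < l k) -> l 2%N = 1 ->
  lpow l (chart2 e Y) = \prod_(1 <= k < d.+1) tl true v l false k ^ Y k.
Proof.
move=> d_ge2 l_gt0 l2; have l_neq0 k : (1 <= k <= d)%N -> l k != 0 by move/l_gt0/lt0r_neq0.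
have l1_unit : l 1%N \is a GRing.unit by rewrite unitfE l_neq0 //; lia.
rewrite lpow_chart2 // l2 exp1rz mul1r [RHS]big_ltn; last by lia.
rewrite [X in _ = _ * X]big_ltn /=; last by lia.
rewrite [X in _ = _ * (_ * X)](eq_big_nat _ _ (F2 := fun k => (l k * l 1%N ^- v k) ^ Y k)).
  rewrite -prod_exprz_twist => [||k k_in]; [|apply: l_neq0; lia..].
  by rewrite exprz_inv !exprzDr // /shear2; ring.
by move=> k /andP[k_ge3 _]; rewrite /tl /tl1 /= !gtn_eqF // (leq_trans _ k_ge3).
Qed.

Lemma lpow_chart2_b (R : realType) e (l : nat -> R) (Y : nat -> int) :
  (2 <= d)%N -> (forall k, (1 <= k <= d)%N -> 0 < l k) -> l 1%N = 1 ->
  lpow l (chart2 e Y) = l 2%N ^+ e * \prod_(1 <= k < d.+1) tl true v l true k ^ Y k.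
Proof.
move=> d_ge2 l_gt0 l1; have l_neq0 k : (1 <= k <= d)%N -> l k != 0 by move/l_gt0/lt0r_neq0.
have l2_unit : l 2%N \is a GRing.unit by rewrite unitfE l_neq0.
rewrite lpow_chart2 // l1 exp1rz mul1r [X in _ = _ * X]big_ltn; last by lia.
rewrite [X in _ = _ * (_ * X)]big_ltn /=; last by lia.
rewrite [X in _ = _ * (_ * (_ * X))](eq_big_nat _ _ (F2 := fun k => (l k * l 2%N ^- v k) ^ Y k)).
  rewrite -prod_exprz_twist => [||k k_in]; [|apply: l_neq0; lia..].
  by rewrite !exprzDr // exprnP /shear2; ring.
by move=> k /andP[k_ge3 _]; rewrite /tl /tl1 /= !gtn_eqF // (leq_trans _ k_ge3).
Qed.

End Chart2.

Lemma shell_gap_case1 (R : realType) d v (la lb : nat -> R) j L l m n :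
  setting d false v la lb ->
  (1 <= j <= d)%N -> (2 <= l)%N -> (l <= L)%N -> (2 <= n - m)%N ->
  let shell := @Volj R d false v j L l n `\` @Volj R d false v j L l m in
  finite_set shell /\
  gap_factor d false v la lb * \sum_(x \in shell) (lpow la x ^+ 2 * lpow lb x ^+ 2) <=
  Cs la shell * Cs lb shell.
Proof.
move=> [d_ge1 [l_gt0 _]] j_in l_ge2 l_le_L n_sub_m.
have la_gt0 k : (1 <= k <= d)%N -> 0 < la k by case/l_gt0.
have lb_gt0 k : (1 <= k <= d)%N -> 0 < lb k by case/l_gt0.
apply: (shell_gap (E := negb) (cb := fun=> 1) (chart := fun=> chart1 d v)
  (box_coord := coords1 v) (parity := fun=> false)) => //.
- by move=> Lv x; apply: Vol1_box.
- by move=> e Y k _; apply: coords1_chart1.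
- by case.
- by move=> x; apply: chart1_coordsK.
- by move=> e Y Y'; apply: eq_chart1.
- by move=> e Y _; apply: lpow_chart1.
- by move=> e Y _; rewrite mul1r; apply: lpow_chart1.
by move=> k k_in; split; apply: (tl_gt0 (d := d)).
Qed.

Lemma shell_gap_case2 (R : realType) d v (la lb : nat -> R) j L l m n :
  setting d true v la lb ->
  (1 <= j <= d)%N -> (2 <= l)%N -> (l <= L)%N -> (2 <= n - m)%N ->
  let shell := @Volj R d true v j L l n `\` @Volj R d true v j L l m in
  finite_set shell /\
  gap_factor d true v la lb * \sum_(x \in shell) (lpow la x ^+ 2 * lpow lb x ^+ 2) <=
  Cs la shell * Cs lb shell.
Proof.
move=> [_ [l_gt0 [d_ge2 [_ [_ [la2 [lb1 _]]]]]]] j_in l_ge2 l_le_L n_sub_m.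
have la_gt0 k : (1 <= k <= d)%N -> 0 < la k by case/l_gt0.
have lb_gt0 k : (1 <= k <= d)%N -> 0 < lb k by case/l_gt0.
apply: (shell_gap (E := predT) (cb := fun e => lb 2%N ^+ e) (chart := chart2 d v)
  (box_coord := coords2 v) (parity := @parity2 d)) => //.
- by move=> Lv x; apply: Vol2_box.
- by move=> e Y k _; apply: coords2_chart2.
- by move=> e Y _; apply: parity2_chart2.
- by move=> x; apply: chart2_coordsK.
- by move=> e Y Y'; apply: eq_chart2.
- by move=> e Y _; apply: lpow_chart2_a.
- by move=> e Y _; apply: lpow_chart2_b.
by move=> k k_in; split; apply: (tl_gt0 (d := d)).
Qed.

Theorem lemma2 (R : realType) (d : nat) (case2 : bool) (v : nat -> nat)
    (la lb : nat -> R) (j L l m n : nat) :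
  setting d case2 v la lb ->
  (1 <= j <= d)%N -> (2 <= l)%N -> (l <= L)%N -> (m < n)%N -> (2 <= n - m)%N ->
  let Lam' := @Volj R d case2 v j L l n `\` @Volj R d case2 v j L l m in
  Cab la lb Lam' <= Cs la Lam' * Cs lb Lam' /\
  Cs la Lam' * Cs lb Lam' <= ctilde d case2 v la lb * Cab la lb Lam'.
Proof.
move=> hyps j_in l_ge2 l_le_L _ n_sub_m Lam'.
(* The hypothesis [m < n] is implied by [2 <= n - m]. *)
have [finL gap] : finite_set Lam' /\
    gap_factor d case2 v la lb * \sum_(x \in Lam') (lpow la x ^+ 2 * lpow lb x ^+ 2) <=
    Cs la Lam' * Cs lb Lam'.
  by case: case2 hyps @Lam' => hyps; [apply: shell_gap_case2 | apply: shell_gap_case1].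
rewrite ctildeE; apply: offdiag_sum_bounds => // [x|x|]; rewrite ?sqr_ge0 //.
by apply: gap_factor_gt1; case: hyps.
Qed.
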